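(* Let $v_1,v_2\in\mathbb{R}^n$, $p\geq 2$, $\delta>0$, and $$J=\int_0^1\int_0^1|v_1-(t-s\delta)v_2|^{p-2}\,ds\,dt.$$ Then there exist constants $C_p>0$ and $\delta_0>0$, both depending only on $p$, such that $$J\geq C_p\left(\max\{|v_1|,|v_2|\}\right)^{p-2}\qquad\text{for all }0<\delta\leq\delta_0.$$ *)

From HB Require Import structures.
From mathcomp Require Import all_boot all_order all_algebra.
From mathcomp Require Import all_classical all_reals all_analysis.
Set Implicit Arguments. Unset Strict Implicit. Unset Printing Implicit Defensive.
Import Order.TTheory GRing.Theory Num.Theory.
Import numFieldNormedType.Exports.
Local Open Scope classical_set_scope.
Local Open Scope ring_scope.

Definition enorm (R : realType) (n : nat) (v : 'rV[R]_n) : R :=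
  Num.sqrt (\sum_(i < n) v ord0 i ^+ 2).

Definition Jint (R : realType) (n : nat) (p delta : R) (v1 v2 : 'rV[R]_n) : \bar R :=
  (\int[@lebesgue_measure R]_(t in `[0%R, 1%R])
     \int[@lebesgue_measure R]_(s in `[0%R, 1%R])
        ((enorm (v1 - (t - s * delta) *: v2)) `^ (p - 2))%:E)%E.

From mathcomp Require Import all_boot all_order all_algebra.
From mathcomp Require Import all_classical all_reals all_analysis.
From mathcomp Require Import lra ring.
Import Order.TTheory GRing.Theory Num.Theory.
Local Open Scope ring_scope.

(* Put M := max(|v1|, |v2|) and u := t - s delta. If |v2| <= |v1|, then
   |v1 - u v2| >= M/8 whenever |u| <= 1/8. Otherwise either the same holds, or
   |v1 - u0 v2| < |v2|/8 for some |u0| <= 1/8, and then |v1 - u v2| >= M/8 for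
   every u in [3/4, 1], because (u - u0) v2 = (v1 - u0 v2) - (v1 - u v2) with
   |u - u0| >= 5/8. For delta <= 1/8 the first range of u covers the strip
   t in [0, 1/8], the second the strip t in [7/8, 1]; on that strip the
   integrand is at least (M/8)^(p-2), so J >= (M/8)^(p-2) / 8.
   The norm estimates only use |x + y|^2 <= 2 (|x|^2 + |y|^2), which avoids
   proving the triangle inequality for [enorm]. *)

Section EuclideanNorm.
Context {R : realType} {n : nat}.
Implicit Types (a : R) (v w : 'rV[R]_n).

Lemma enorm_ge0 v : 0 <= enorm v.
Proof. exact: sqrtr_ge0. Qed.

Lemma sqr_enorm v : enorm v ^+ 2 = \sum_(i < n) v ord0 i ^+ 2.
Proof. by rewrite sqr_sqrtr // sumr_ge0 // => i _; rewrite sqr_ge0. Qed.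

Lemma sqr_enormZ a v : enorm (a *: v) ^+ 2 = a ^+ 2 * enorm v ^+ 2.
Proof.
by rewrite !sqr_enorm mulr_sumr; apply: eq_bigr => i _; rewrite mxE exprMn.
Qed.

Lemma enormN v : enorm (- v) = enorm v.
Proof.
by rewrite /enorm; congr Num.sqrt; apply: eq_bigr => i _; rewrite mxE sqrrN.
Qed.

Lemma sqr_enormD_le v w : enorm (v + w) ^+ 2 <= 2 * (enorm v ^+ 2 + enorm w ^+ 2).
Proof.
rewrite !sqr_enorm -big_split mulr_sumr /=; apply: ler_sum => i _.
by rewrite mxE; have := sqr_ge0 (v ord0 i - w ord0 i); lra.
Qed.

Lemma ler_enorm_sqr a v : 0 <= a -> (a <= enorm v) = (a ^+ 2 <= enorm v ^+ 2).
Proof. by move=> a0; rewrite ler_sqr ?nnegrE ?enorm_ge0. Qed.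

End EuclideanNorm.

Section FarFromLine.
Context {R : realType} {n : nat} (v1 v2 : 'rV[R]_n).
Implicit Types u : R.

Lemma enorm_subZ_small u :
  enorm v2 <= enorm v1 -> `|u| <= 1/8 -> enorm v1 / 8 <= enorm (v1 - u *: v2).
Proof.
move=> le21 /[!ler_norml] /andP[u1 u2].
rewrite ler_enorm_sqr; last by have := enorm_ge0 v1; lra.
have := sqr_enormD_le (v1 - u *: v2) (u *: v2); rewrite subrK sqr_enormZ.
have := enorm_ge0 v2; have := enorm_ge0 (v1 - u *: v2).
have : enorm v2 ^+ 2 <= enorm v1 ^+ 2 by rewrite -ler_enorm_sqr ?enorm_ge0.
have : u ^+ 2 <= 1/64 by nra.
nra.
Qed.

Lemma enorm_subZ_far u0 u :
  enorm (v1 - u0 *: v2) < enorm v2 / 8 -> 5/8 <= `|u - u0| ->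
  enorm v2 / 8 <= enorm (v1 - u *: v2).
Proof.
move=> near0 far.
have e2 := enorm_ge0 v2; have e0 := enorm_ge0 (v1 - u0 *: v2).
rewrite ler_enorm_sqr; last lra.
have split_diff : (u - u0) *: v2 = (v1 - u0 *: v2) + - (v1 - u *: v2).
  by rewrite scalerBl opprB [RHS]addrC addrA subrK.
have := sqr_enormD_le (v1 - u0 *: v2) (- (v1 - u *: v2)).
rewrite -split_diff sqr_enormZ enormN.
have : 25/64 <= (u - u0) ^+ 2.
  by rewrite -real_normK ?num_real //; have := normr_ge0 (u - u0); nra.
have : enorm (v1 - u0 *: v2) ^+ 2 < enorm v2 ^+ 2 / 64 by nra.
nra.
Qed.

Lemma enorm_subZ_dichotomy (M := Num.max (enorm v1) (enorm v2)) :
  (forall u, `|u| <= 1/8 -> M / 8 <= enorm (v1 - u *: v2)) \/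
  (forall u, 3/4 <= u <= 1 -> M / 8 <= enorm (v1 - u *: v2)).
Proof.
rewrite {}/M; have [le12|lt21] := leP (enorm v1) (enorm v2); last first.
  by left => u; apply: enorm_subZ_small; apply: ltW.
have [|] := pselect (forall u, `|u| <= 1/8 -> enorm v2 / 8 <= enorm (v1 - u *: v2)).
  by left.
move=> /existsNP [u0 /not_implyP [u0_small /negP]]; rewrite -ltNge => near0.
right => u /andP[u1 _]; apply: (enorm_subZ_far u0 u near0).
move: u0_small; rewrite !ler_norml => /andP[_ u0_le].
by rewrite ler_normr; apply/orP; left; lra.
Qed.

Lemma enorm_subZ_on_strip (delta : R) : 0 < delta -> delta <= 1/8 ->
  exists2 a, 0 <= a <= 7/8 & forall t s, a <= t <= a + 1/8 -> 0 <= s <= 1 ->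
    Num.max (enorm v1) (enorm v2) / 8 <= enorm (v1 - (t - s * delta) *: v2).
Proof.
move=> d0 d1.
have sd_range s : 0 <= s <= 1 -> 0 <= s * delta <= 1/8.
  by move=> /andP[s0 s1]; apply/andP; split; nra.
have [small|large] := enorm_subZ_dichotomy.
- exists 0; first lra.
  move=> t s /andP[t0 t1] /sd_range /andP[sd0 sd1]; apply: small.
  by rewrite ler_norml; apply/andP; split; lra.
- exists (7/8); first lra.
  move=> t s /andP[t0 t1] /sd_range /andP[sd0 sd1]; apply: large.
  by apply/andP; split; lra.
Qed.

End FarFromLine.

Local Open Scope classical_set_scope.

(* No measurability is assumed: the outer integrand of [Jint] is not known to be
   measurable. *)
Lemma ge0_le_integral_nomeas d (T : measurableType d) (R : realType)
    (mu : {measure set T -> \bar R}) (D : set T) (f g : T -> \bar R) :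
  (forall x, D x -> (0 <= f x)%E) -> (forall x, D x -> (f x <= g x)%E) ->
  (\int[mu]_(x in D) f x <= \int[mu]_(x in D) g x)%E.
Proof.
move=> f0 fg.
have g0 x : D x -> (0 <= g x)%E by move=> Dx; apply: le_trans (f0 _ Dx) (fg _ Dx).
rewrite !ge0_integralE //; apply: ereal_sup_le => _ [h hf <-]; exists h => // x.
apply: le_trans (hf x) _; rewrite /patch; case: ifPn => // /set_mem Dx; exact: fg.
Qed.

Section StripBound.
Context {R : realType}.
Local Notation mu := (@lebesgue_measure R).

Lemma lebesgue_measure_itv_cc (a b : R) : a < b -> mu `[a, b] = (b - a)%:E.
Proof. by move=> ab; rewrite lebesgue_measure_itv /= lte_fin ab -EFinD. Qed.

Lemma integral01_ge_cst (g : R -> R) (c : R) : 0 <= c ->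
  (forall s, 0 <= s <= 1 -> c <= g s) ->
  (c%:E <= \int[mu]_(s in `[0%R, 1%R]) (g s)%:E)%E.
Proof.
move=> c0 cg.
have mu01 : mu `[0%R, 1%R] = 1%:E.
  by rewrite -[X in _ = X%:E]subr0; exact: lebesgue_measure_itv_cc.
rewrite -[leLHS]mule1 -mu01 -integral_cst //.
apply: ge0_le_integral_nomeas => s s01; first by rewrite lee_fin.
by rewrite lee_fin cg //; move: s01; rewrite /= in_itv.
Qed.

Lemma iterated_integral01_ge_strip (f : R -> R -> R) (a w c : R) :
  0 <= a -> 0 < w -> a + w <= 1 -> 0 <= c -> (forall t s, 0 <= f t s) ->
  (forall t s, a <= t <= a + w -> 0 <= s <= 1 -> c <= f t s) ->
  ((c * w)%:E <= \int[mu]_(t in `[0%R, 1%R]) \int[mu]_(s in `[0%R, 1%R]) (f t s)%:E)%E.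
Proof.
move=> a0 w0 aw1 c0 f0 fc.
pose T : set R := `[a, a + w].
have mT : measurable T by exact: measurable_itv.
have T01 : T `<=` `[0%R, 1%R].
  by move=> x; rewrite /T /= !in_itv /= => /andP[x1 x2]; apply/andP; split; lra.
apply: (@le_trans _ _ (\int[mu]_(t in `[0%R, 1%R]) (c%:E * (\1_T t)%:E))%E).
  rewrite ge0_integralZl //; last first.
    by apply/measurable_realfun.measurable_EFinP; exact: measurable_realfun.measurable_indic.
  rewrite integral_indic // setIidl //; set muT := (X in (_ <= _ * X)%E).
  have -> : muT = (a + w - a)%:E by apply: lebesgue_measure_itv_cc; lra.
  by rewrite -EFinM lee_fin addrAC subrr add0r.
apply: ge0_le_integral_nomeas => t t01.
  by rewrite lee_fin indicE mulr_ge0 //; case: (t \in T).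
rewrite indicE; have [tT|_] := boolP (t \in T).
  rewrite mule1; apply: integral01_ge_cst => // s s01; apply: fc => //.
  by move: tT; rewrite inE /T /= in_itv.
by rewrite mule0; apply: integral_ge0 => s _; rewrite lee_fin.
Qed.

End StripBound.

Theorem lemma3p2 (R : realType) (p : R) (hp : 2 <= p) :
  exists C : R, exists delta0 : R, 0 < C /\ 0 < delta0 /\
    forall (n : nat) (v1 v2 : 'rV[R]_n) (delta : R),
      0 < delta -> delta <= delta0 ->
      ((C * (Num.max (enorm v1) (enorm v2)) `^ (p - 2))%:E <= Jint p delta v1 v2)%E.
Proof.
have r0 : 0 <= p - 2 by lra.
exists ((1/8) `^ (p - 2) / 8), (1/8); split; first by rewrite divr_gt0 ?powR_gt0.
split=> // n v1 v2 delta d0 d1.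
set M := Num.max (enorm v1) (enorm v2).
have M0 : 0 <= M by rewrite le_max enorm_ge0.
have [a /andP[a0 a1] strip] := enorm_subZ_on_strip v1 v2 delta d0 d1.
have -> : (1/8) `^ (p - 2) / 8 * M `^ (p - 2) = (M / 8) `^ (p - 2) * (1/8).
  have -> : M / 8 = (1/8) * M by rewrite mulrC div1r.
  by rewrite [in RHS]powRM //; [ring | lra..].
apply: (iterated_integral01_ge_strip _ a) => //; [lra | exact: powR_ge0 | |].
- by move=> t s; apply: powR_ge0.
- move=> t s ht hs; apply: ge0_ler_powR; rewrite ?nnegrE ?enorm_ge0 ?divr_ge0 //.
  exact: strip.
Qed.
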